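(* Let $E=(E_{m,n})_{m,n\in\mathbb N}$ be a nonnegative process adapted to a filtration sequence $\mathcal F$. The following are equivalent: (i) for every bounded integer sequence $r$, $E$ is an $r$-asymptotic e-process for $\mathcal P$ and $\mathcal F$; (ii) there exists an integer sequence $r=(r_m)_{m\in\mathbb N}$ with $r_m\to\infty$ as $m\to\infty$ such that $E$ is an $r$-asymptotic e-process for $\mathcal P$ and $\mathcal F$.
   Context: $(\Omega,\mathcal A)$ is a measurable space and $\mathcal P$ a set of probability measures on it. $\mathbb N=\{0,1,2,\dots\}$; an extended integer is an element of $\mathbb N\cup\{\infty\}$. Nonnegative random variables take values in $[0,\infty]$, and for such $X$, $\mathbb E_P[X]:=\infty$ if $X$ is not $P$-integrable. For a process $(X_n)$, $X_\infty:=\limsup_n X_n$. A filtration sequence is a family $\mathcal F=(\mathcal F_{m,n})_{m,n\in\mathbb N}$ of sub-$\sigma$-algebras of $\mathcal A$ such that for each $m$, $\mathcal F_{m,\bullet}$ is a filtration; $E$ is adapted if $E_{m,n}$ is $\mathcal F_{m,n}$-measurable. For a filtration $\mathcal G$ and $\rho\in\mathbb N\cup\{\infty\}$, $\mathcal T(\rho,\mathcal G,\mathcal P)$ is the set of $\mathcal G$-stopping times $\tau$ (values in $\mathbb N\cup\{\infty\}$) with $P[\tau\le\rho]=1$ for all $P\in\mathcal P$. For an extended integer sequence $r$, $\mathcal T(r,\mathcal F,\mathcal P)$ is the set of sequences $(\tau_m)$ with $\tau_m\in\mathcal T(r_m,\mathcal F_{m,\bullet},\mathcal P)$. A nonnegative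 adapted process $E$ is an $r$-asymptotic e-process (for $\mathcal P$ and $\mathcal F$) if for every $\tau\in\mathcal T(r,\mathcal F,\mathcal P)$, $\limsup_{m\to\infty}\sup_{P\in\mathcal P}\mathbb E_P[E_{m,\tau_m}]\le 1$. *)

From HB Require Import structures.
From mathcomp Require Import all_boot all_order all_algebra.
From mathcomp Require Import all_classical all_reals all_analysis measurable_realfun.
Set Implicit Arguments. Unset Strict Implicit. Unset Printing Implicit Defensive.
Import Order.TTheory GRing.Theory Num.Theory.
Local Open Scope classical_set_scope.
Local Open Scope ereal_scope.

(* Extended integers N ∪ {∞} are encoded as [option nat], [None] = ∞. *)
Definition xle (a b : option nat) : Prop :=
  match a, b with
  | _, None => True
  | None, Some _ => False
  | Some i, Some j => (i <= j)%N
  end.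

Section Defs.
Context (d : measure_display) (T : measurableType d) (R : realType).

Definition filtration_seq (F : nat -> nat -> set (set T)) : Prop :=
  (forall m n, sigma_algebra setT (F m n)) /\
  (forall m n A, F m n A -> measurable A) /\
  (forall m n n' A, (n <= n')%N -> F m n A -> F m n' A).

Definition adapted (F : nat -> nat -> set (set T)) (E : nat -> nat -> T -> \bar R)
  : Prop :=
  forall m n (B : set (\bar R)), measurable B -> F m n (E m n @^-1` B).

Definition nonneg_process (E : nat -> nat -> T -> \bar R) : Prop :=
  forall m n x, 0 <= E m n x.

Definition stopping_time (G : nat -> set (set T)) (tau : T -> option nat) : Prop :=
  forall n, G n [set x | xle (tau x) (Some n)].

Definition bounded_stopping_time (G : nat -> set (set T)) (Ps : set (probability T R))
  (rho : option nat) (tau : T -> option nat) : Prop :=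
  stopping_time G tau /\
  forall P, Ps P -> P [set x | xle (tau x) rho] = 1.

Definition stopped (E : nat -> nat -> T -> \bar R) (m : nat) (tau : T -> option nat)
  : T -> \bar R :=
  fun x => match tau x with
           | Some n => E m n x
           | None => limn_esup (fun n => E m n x)
           end.

Definition asymptotic_e_process (Ps : set (probability T R))
  (F : nat -> nat -> set (set T)) (r : nat -> option nat)
  (E : nat -> nat -> T -> \bar R) : Prop :=
  forall tau : nat -> T -> option nat,
    (forall m, bounded_stopping_time (F m) Ps (r m) (tau m)) ->
    limn_esup (fun m =>
      ereal_sup [set \int[P]_x stopped E m (tau m) x | P in Ps]) <= 1.

End Defs.

(* If E is a k-asymptotic e-process for every constant k, then for each k the
   bound [1 + 1/(k+1)] holds for all k-bounded stopping times simultaneously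
   from some index N_k on: otherwise choosing, for each m, a stopping time
   violating it would contradict the k-asymptotic property.  Letting the
   horizon r_m grow so slowly that N_(r_m) <= m gives an r_m -> oo for which E
   is r-asymptotic.  Conversely, once r_m exceeds a bound B, every B-bounded
   stopping time is r-bounded, and limsups only see the tail. *)

From HB Require Import structures.
From mathcomp Require Import all_boot all_order all_algebra.
From mathcomp Require Import all_classical all_reals all_analysis measurable_realfun.
Import Order.TTheory GRing.Theory Num.Theory.
Local Open Scope classical_set_scope.

Section limn_esup_bound.
Context (R : realType).
Local Open Scope ereal_scope.

Lemma limn_esup_leP (u : (\bar R)^nat) (l : R) :
  limn_esup u <= l%:E <->
  forall e : R, (0 < e)%R -> \forall m \near \oo, u m <= (l + e)%:E.
Proof.
split=> [ul e e0|ule].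
  have : limn_esup u < (l + e)%:E by apply: le_lt_trans ul _; rewrite lte_fin ltrDl.
  rewrite /limn_esup /limf_esup => /ereal_inf_lt [_ [V Voo <-]] supV.
  apply: filterS Voo => m Vm; apply/ltW/(le_lt_trans _ supV).
  by apply: ereal_sup_ubound; exists m.
apply/lee_addgt0Pr => e e0; have [N _ uN] := ule e e0.
apply: (@le_trans _ _ (ereal_sup (u @` [set m | (N <= m)%N]))).
  by apply: ereal_inf_lbound; exists [set m | (N <= m)%N] => //; exists N.
by apply: ge_ereal_sup => _ [m Nm <-]; rewrite -EFinD; apply: uN.
Qed.

Lemma limn_esup_le_uniform (A : Type) (S : nat -> set A)
    (f : nat -> A -> \bar R) (l : R) :
  (forall m, S m !=set0) ->
  (forall t : nat -> A, (forall m, S m (t m)) ->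
     limn_esup (fun m => f m (t m)) <= l%:E) ->
  forall e : R, (0 < e)%R ->
  \forall m \near \oo, forall a, S m a -> f m a <= (l + e)%:E.
Proof.
move=> S0 fS e e0.
pose bad m a := (l + e)%:E < f m a.
(* A worst case at each m: a violating point whenever there is one. *)
have [t tP] : {t : nat -> A & forall m,
    S m (t m) /\ ((exists2 a, S m a & bad m a) -> bad m (t m))}.
  apply: (choice (P := fun m a => S m a /\ ((exists2 b, S m b & bad m b) -> bad m a))).
  move=> m; have [[a Sa ba]|nobad] := pselect (exists2 a, S m a & bad m a).
    by exists a.
  by have [a Sa] := S0 m; exists a; split=> // badm; case: nobad.
have := fS t (fun m => (tP m).1) => /limn_esup_leP/(_ e e0).
apply: filterS => m ftm a Sa; rewrite leNgt; apply/negP => fa.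
by have := (tP m).2 (ex_intro2 _ _ a Sa fa); rewrite /bad ltNge ftm.
Qed.

End limn_esup_bound.

Section slow_index.
Variable N : nat -> nat.

(* Steps to the next index only once N allows it, so that eventually
   N (slow_index m) <= m, while slow_index m still tends to oo. *)
Fixpoint slow_index m :=
  if m is m'.+1 then
    if (N (slow_index m').+1 <= m'.+1)%N then (slow_index m').+1 else slow_index m'
  else 0.

Lemma slow_index_homo : {homo slow_index : m n / (m <= n)%N}.
Proof. by apply: (homo_leq leqnn leq_trans) => m /=; case: ifP. Qed.

Lemma slow_index_eq0_or_le m : slow_index m = 0 \/ (N (slow_index m) <= m)%N.
Proof.
elim: m => [|m IH] /=; first by left.
case: ifP => [|_]; first by right.
by case: IH => [->|Nm]; [left|right; apply: leqW].
Qed.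

Lemma slow_index_unbounded K : exists m, (K <= slow_index m)%N.
Proof.
elim: K => [|K [m Km]]; first by exists 0.
exists (maxn m (N K.+1)).+1 => /=.
have : (K <= slow_index (maxn m (N K.+1)))%N.
  by apply: leq_trans Km _; apply/slow_index_homo/leq_maxl.
rewrite leq_eqVlt => /orP[/eqP <-|Klt]; first by rewrite leqW ?leq_maxr.
by case: ifP => // _; rewrite ltnS ltnW.
Qed.

Lemma slow_index_divergent K : \forall m \near \oo, (K <= slow_index m)%N.
Proof.
have [m0 Km0] := slow_index_unbounded K.
by exists m0 => // m /= m0m; apply: leq_trans Km0 (slow_index_homo _ _ m0m).
Qed.

Lemma slow_index_le_near : \forall m \near \oo, (N (slow_index m) <= m)%N.
Proof.
exists (N 0) => // m /= N0m.
by case: (slow_index_eq0_or_le m) => [->|].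
Qed.

End slow_index.

Section bounded_stopping_time.
Context (d : measure_display) (T : measurableType d) (R : realType)
  (G : nat -> set (set T)) (Ps : set (probability T R)).

Lemma bounded_stopping_time0 rho : (forall n, sigma_algebra setT (G n)) ->
  bounded_stopping_time G Ps rho (fun=> Some 0).
Proof.
move=> Gsigma; split=> [n|P _].
  have -> : [set x : T | xle (Some 0) (Some n)] = setT `\` set0.
    by rewrite setD0; apply/seteqP; split.
  by have [G0 GD _] := Gsigma n; apply: GD.
have -> : [set x : T | xle (Some 0) rho] = setT.
  by apply/seteqP; split => x //= _; case: rho.
exact: probability_setT.
Qed.

Lemma bounded_stopping_timeW (a b : nat) tau :
  (forall n A, G n A -> measurable A) -> (a <= b)%N ->
  bounded_stopping_time G Ps (Some a) tau ->
  bounded_stopping_time G Ps (Some b) tau.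
Proof.
move=> Gmeas ab [tauG tau_a]; split=> // P PP.
have meas n : measurable [set x | xle (tau x) (Some n)] by apply/Gmeas/tauG.
apply/eqP; rewrite eq_le probability_le1 //= -(tau_a P PP).
rewrite le_measure ?inE //.
by move=> x /=; case: (tau x) => //= n na; apply: leq_trans na ab.
Qed.

End bounded_stopping_time.

Section asymptotic_e_process.
Context (d : measure_display) (T : measurableType d) (R : realType)
  (Ps : set (probability T R)) (F : nat -> nat -> set (set T))
  (E : nat -> nat -> T -> \bar R).
Hypothesis F_filtration : filtration_seq F.
Local Open Scope ereal_scope.

Let F_measurable m n A : F m n A -> measurable A.
Proof. by case: F_filtration => _ [+ _]; apply. Qed.

Let F_stopping_time0 m rho : bounded_stopping_time (F m) Ps rho (fun=> Some 0%N).
Proof. by apply: bounded_stopping_time0 => n; case: F_filtration. Qed.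

Lemma asymptotic_e_process_near (r r' : nat -> nat) :
  (\forall m \near \oo, (r' m <= r m)%N) ->
  asymptotic_e_process Ps F (fun m => Some (r m)) E ->
  asymptotic_e_process Ps F (fun m => Some (r' m)) E.
Proof.
move=> r'r Er tau tauP.
pose tau' m := if (r' m <= r m)%N then tau m else fun=> Some 0%N.
have tau'P m : bounded_stopping_time (F m) Ps (Some (r m)) (tau' m).
  rewrite /tau'; case: ifPn => [r'm|_]; last exact: F_stopping_time0.
  exact: bounded_stopping_timeW (@F_measurable m) r'm (tauP m).
apply/limn_esup_leP => e e0.
have /limn_esup_leP/(_ e e0) := Er tau' tau'P.
by apply: filterS2 r'r => m r'm; rewrite /tau' r'm.
Qed.

Lemma asymptotic_e_process_divergent :
  (forall k, asymptotic_e_process Ps F (fun=> Some k) E) ->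
  exists r : nat -> nat, (forall M, \forall m \near \oo, (M <= r m)%N) /\
    asymptotic_e_process Ps F (fun m => Some (r m)) E.
Proof.
move=> Ek.
have /choice[N NP] k : exists N, forall m, (N <= m)%N ->
    forall tau, bounded_stopping_time (F m) Ps (Some k) tau ->
    ereal_sup [set \int[P]_x stopped E m tau x | P in Ps] <= (1 + k.+1%:R^-1)%R%:E.
  have [|N _ NP] := @limn_esup_le_uniform R _
    (fun m => bounded_stopping_time (F m) Ps (Some k))
    (fun m tau => ereal_sup [set \int[P]_x stopped E m tau x | P in Ps]) 1%R
    (fun m => ex_intro _ _ (F_stopping_time0 m _)) (Ek k) (k.+1%:R^-1)%R.
    by rewrite invr_gt0 ltr0n.
  by exists N.
exists (slow_index N); split=> [|tau tauP]; first exact: slow_index_divergent.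
apply/limn_esup_leP => e e0; pose K := Num.Def.trunc e^-1.
apply: filterS2 (slow_index_divergent N K) (slow_index_le_near N) => m Km Nm.
apply: le_trans (NP _ _ Nm _ (tauP m)) _.
rewrite lee_fin lerD2l; apply/ltW; rewrite invf_plt ?posrE ?ltr0n//.
by apply: lt_le_trans (truncnS_gt e^-1) _; rewrite ler_nat ltnS.
Qed.

End asymptotic_e_process.

Theorem mainTheorem2 (d : measure_display) (T : measurableType d) (R : realType)
  (Ps : set (probability T R)) (F : nat -> nat -> set (set T))
  (E : nat -> nat -> T -> \bar R) :
  filtration_seq F -> adapted F E -> nonneg_process E ->
  ((forall r : nat -> nat, (exists B, forall m, (r m <= B)%N) ->
      asymptotic_e_process Ps F (fun m => Some (r m)) E)
   <->
   (exists r : nat -> nat, (forall M, \forall m \near \oo, (M <= r m)%N) /\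
      asymptotic_e_process Ps F (fun m => Some (r m)) E)).
Proof.
move=> F_filtration _ _.
split=> [E_bounded | [r [r_oo Er]] r' [B r'B]].
  apply: asymptotic_e_process_divergent => // k.
  by apply: E_bounded; exists k.
apply: asymptotic_e_process_near Er => //.
by apply: filterS (r_oo B) => m; apply: leq_trans (r'B m).
Qed.
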